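(* Let $\mathcal X\subseteq\mathbb R^m$ be nonempty, convex and compact with diameter $D>0$, $F:\mathbb R^m\to\mathbb R^r$ affine, $C\in\mathbb R^{r\times n}$ with nonzero columns, $\Theta(x,y)=\frac12\|F(x)-Cy\|^2$, and $L>0$ such that for every $y\in\{0,1\}^n$, $\Theta(\cdot,y)$ is $L$-Lipschitz on $\mathcal X$ and $\|\nabla_x\Theta(x,y)\|\le L$ on $\mathcal X$. Given $\epsilon>0$ set $K=\lceil 9((D^2+L^2)/(2\epsilon))^2\rceil$, choose $x_0\in\mathcal X$, and for $k=0,\dots,K-1$ let $y_k=\operatorname{DG}(\Theta(x_k,\cdot))$, $x_{k+1}=\operatorname{Proj}_{\mathcal X}(x_k-K^{-1/2}\nabla_x\Theta(x_k,y_k))$; output $\hat x=\frac1K\sum_{k=0}^{K-1}x_k$ and $\hat y=\operatorname{DG}(\Theta(\hat x,\cdot))$. If $C$ is obtuse, $(\hat x,\hat y)$ is a $(\frac13,\epsilon)$-approximate minimax point of $\min_{x\in\mathcal X}\max_{y\in\{0,1\}^n}\Theta(x,y)$. If the columns of $C$ are mutually orthogonal, $(\hat x,\hat y)$ is an $\epsilon$-global minimax point of that problem.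
   Context: $C=(c_1,\dots,c_n)$ is obtuse if $c_i^\top c_j\le0$ for all $i\neq j$. $\operatorname{Proj}_{\mathcal X}$ is Euclidean projection. $\operatorname{DG}(\Theta(x,\cdot))$ is the double greedy procedure: $\underline y^0=\mathbf 0$, $\overline y^0=\mathbf 1$; for $k=1,\dots,n$, with $a=\Theta(x,\underline y^{k-1}+\mathbf e_k)-\Theta(x,\underline y^{k-1})$ and $b=\Theta(x,\overline y^{k-1}-\mathbf e_k)-\Theta(x,\overline y^{k-1})$, if $a\ge b$ set $\underline y^k=\underline y^{k-1}+\mathbf e_k,\ \overline y^k=\overline y^{k-1}$, else $\underline y^k=\underline y^{k-1},\ \overline y^k=\overline y^{k-1}-\mathbf e_k$; return $\underline y^n(=\overline y^n)$. With $\mathcal Y=\{0,1\}^n$, $(x^*,y^* )\in\mathcal X\times\mathcal Y$ is an $(\alpha,\epsilon)$-approximate minimax point if $\alpha\max_{y\in\mathcal Y}\Theta(x^*,y)\le\Theta(x^*,y^* )\le\frac1\alpha\min_{x\in\mathcal X}\max_{y\in\mathcal Y}\Theta(x,y)+\epsilon$; an $\epsilon$-global minimax point is an $(1,\epsilon)$-approximate minimax point. *)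

From HB Require Import structures.
From mathcomp Require Import all_boot all_order all_algebra.
From mathcomp Require Import all_classical all_reals all_analysis.
Set Implicit Arguments. Unset Strict Implicit. Unset Printing Implicit Defensive.
Import Order.TTheory GRing.Theory Num.Theory.
Import numFieldNormedType.Exports.
Local Open Scope classical_set_scope.
Local Open Scope ring_scope.

Section Defs.
Variable R : realType.

Definition enorm k (v : 'cV[R]_k) : R := Num.sqrt (\sum_i (v i 0) ^+ 2).

Definition bvec n := {ffun 'I_n -> bool}.
Definition rvec n (y : bvec n) : 'cV[R]_n := \col_i ((y i)%:R).

Definition Theta m r n (F : 'cV[R]_m -> 'cV[R]_r) (C : 'M[R]_(r, n))
  (x : 'cV[R]_m) (y : bvec n) : R :=
  2^-1 * (enorm (F x - C *m rvec y)) ^+ 2.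

Definition affine m r (F : 'cV[R]_m -> 'cV[R]_r) :=
  exists (A : 'M[R]_(r, m)) (b : 'cV[R]_r), forall x, F x = A *m x + b.

Definition diam m (X : set 'cV[R]_m) : R :=
  sup [set d | exists x y, X x /\ X y /\ d = enorm (x - y)].

Definition grad m (f : 'cV[R]_m -> R) (x : 'cV[R]_m) : 'cV[R]_m :=
  \col_i ('D_(delta_mx i 0) f x).

Definition proj m (X : set 'cV[R]_m) (z : 'cV[R]_m) : 'cV[R]_m :=
  xget 0 [set p | X p /\ forall q, X q -> enorm (z - p) <= enorm (z - q)].

Definition coldot r n (C : 'M[R]_(r, n)) (i j : 'I_n) : R :=
  \sum_k C k i * C k j.
Definition obtuse r n (C : 'M[R]_(r, n)) :=
  forall i j : 'I_n, i != j -> coldot C i j <= 0.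
Definition orthogonal_cols r n (C : 'M[R]_(r, n)) :=
  forall i j : 'I_n, i != j -> coldot C i j = 0.
Definition nonzero_cols r n (C : 'M[R]_(r, n)) :=
  forall i : 'I_n, col i C != 0.

Definition setb n (v : bvec n) (k : 'I_n) (b : bool) : bvec n :=
  [ffun i => if i == k then b else v i].
Definition dg_step n (g : bvec n -> R) (p : bvec n * bvec n) (k : 'I_n) :=
  let: (lo, hi) := p in
  let a := g (setb lo k true) - g lo in
  let b := g (setb hi k false) - g hi in
  if b <= a then (setb lo k true, hi) else (lo, setb hi k false).
Definition DG n (g : bvec n -> R) : bvec n :=
  (foldl (dg_step g) ([ffun=> false], [ffun=> true]) (enum 'I_n)).1.

Definition maxY m n (Th : 'cV[R]_m -> bvec n -> R) (x : 'cV[R]_m) : R :=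
  sup [set Th x y | y in [set: bvec n]].
Definition minmax m n (X : set 'cV[R]_m) (Th : 'cV[R]_m -> bvec n -> R) : R :=
  inf [set maxY Th x | x in X].

Definition approx_minimax m n (X : set 'cV[R]_m) (Th : 'cV[R]_m -> bvec n -> R)
  (alpha eps : R) (xs : 'cV[R]_m) (ys : bvec n) :=
  X xs /\ alpha * maxY Th xs <= Th xs ys /\
  Th xs ys <= alpha^-1 * minmax X Th + eps.

Definition global_minimax m n (X : set 'cV[R]_m) (Th : 'cV[R]_m -> bvec n -> R)
  (eps : R) xs ys := approx_minimax X Th 1 eps xs ys.

Definition nb_iter (D L eps : R) : nat :=
  `| Num.ceil (9 * ((D ^+ 2 + L ^+ 2) / (2 * eps)) ^+ 2) |%N.

Fixpoint iterate m n (X : set 'cV[R]_m) (Th : 'cV[R]_m -> bvec n -> R)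
  (step : R) (x0 : 'cV[R]_m) (k : nat) : 'cV[R]_m :=
  match k with
  | 0 => x0
  | k'.+1 => let xk := iterate X Th step x0 k' in
             let yk := DG (Th xk) in
             proj X (xk - step *: grad (fun x => Th x yk) xk)
  end.

Definition xhat m n (X : set 'cV[R]_m) (Th : 'cV[R]_m -> bvec n -> R)
  (K : nat) (x0 : 'cV[R]_m) : 'cV[R]_m :=
  (K%:R)^-1 *: \sum_(k < K) iterate X Th (Num.sqrt (K%:R))^-1 x0 k.

Definition yhat m n (X : set 'cV[R]_m) (Th : 'cV[R]_m -> bvec n -> R)
  (K : nat) (x0 : 'cV[R]_m) : bvec n := DG (Th (xhat X Th K x0)).

End Defs.

(* For fixed y, Theta(., y) is a convex quadratic, so projected subgradient descent
   against the double-greedy responses y_k = DG(Theta(x_k, .)) has average regret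
   at most eps/3 for the step size K^-1/2, and by Jensen the average xh satisfies
   Theta(xh, y) <= (1/K) sum_k Theta(x_k, y) for every y.  For fixed x, expanding the
   square shows that the marginal gain of a coordinate k is an affine function of
   y whose coefficients are the inner products of the columns of C with column k:
   obtuse columns make Theta(x, .) submodular, so double greedy is a
   1/3-approximation of the maximum (Buchbinder-Feldman-Naor-Schwartz), and
   orthogonal columns make it modular, so double greedy is exact.  Chaining these
   inequalities bounds max_y Theta(xh, y) by c * max_y Theta(x, y) + eps for every
   x in X, with c = 3 resp. c = 1. *)

From Pilot Require Import Defs.
From HB Require Import structures.
From mathcomp Require Import all_boot all_order all_algebra.
From mathcomp Require Import all_classical all_reals all_analysis.
From mathcomp Require Import ring lra.
Set Implicit Arguments. Unset Strict Implicit. Unset Printing Implicit Defensive.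
Import Order.TTheory GRing.Theory Num.Theory.
Import numFieldNormedType.Exports.
Local Open Scope classical_set_scope.
Local Open Scope ring_scope.

(** * Inner product of column vectors *)

Section InnerProduct.
Variable R : realType.

Definition dotv k (a b : 'cV[R]_k) : R := \sum_i a i 0 * b i 0.
Definition sqnorm k (a : 'cV[R]_k) : R := dotv a a.

Lemma sqnorm_ge0 k (a : 'cV[R]_k) : 0 <= sqnorm a.
Proof. by apply: sumr_ge0 => i _; rewrite -expr2 sqr_ge0. Qed.

Lemma enorm_ge0 k (v : 'cV[R]_k) : 0 <= enorm v.
Proof. exact: sqrtr_ge0. Qed.

Lemma enorm_sqr k (v : 'cV[R]_k) : enorm v ^+ 2 = sqnorm v.
Proof.
rewrite /enorm sqr_sqrtr; last by apply: sumr_ge0 => i _; rewrite sqr_ge0.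
by apply: eq_bigr => i _; rewrite expr2.
Qed.

Lemma ler_enorm k (u v : 'cV[R]_k) : (enorm u <= enorm v) = (sqnorm u <= sqnorm v).
Proof. by rewrite -!enorm_sqr ler_sqr // nnegrE enorm_ge0. Qed.

Lemma dotvC k (a b : 'cV[R]_k) : dotv a b = dotv b a.
Proof. by apply: eq_bigr => i _; rewrite mulrC. Qed.

Lemma dotvDl k (a b c : 'cV[R]_k) : dotv (a + b) c = dotv a c + dotv b c.
Proof. by rewrite /dotv -big_split; apply: eq_bigr => i _; rewrite mxE mulrDl. Qed.

Lemma dotvZl k (t : R) (a b : 'cV[R]_k) : dotv (t *: a) b = t * dotv a b.
Proof. by rewrite /dotv mulr_sumr; apply: eq_bigr => i _; rewrite mxE mulrA. Qed.

Lemma dotvNl k (a b : 'cV[R]_k) : dotv (- a) b = - dotv a b.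
Proof. by rewrite -scaleN1r dotvZl mulN1r. Qed.

Lemma dotvBl k (a b c : 'cV[R]_k) : dotv (a - b) c = dotv a c - dotv b c.
Proof. by rewrite dotvDl dotvNl. Qed.

Lemma dotvDr k (a b c : 'cV[R]_k) : dotv c (a + b) = dotv c a + dotv c b.
Proof. by rewrite dotvC dotvDl !(dotvC c). Qed.

Lemma dotvZr k (t : R) (a b : 'cV[R]_k) : dotv b (t *: a) = t * dotv b a.
Proof. by rewrite dotvC dotvZl dotvC. Qed.

Lemma dotvNr k (a b : 'cV[R]_k) : dotv b (- a) = - dotv b a.
Proof. by rewrite dotvC dotvNl dotvC. Qed.

Lemma dotv0r k (a : 'cV[R]_k) : dotv a 0 = 0.
Proof. by rewrite /dotv big1 // => i _; rewrite mxE mulr0. Qed.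

Lemma dotv_sumr k K (a : 'cV[R]_k) (v : 'I_K -> 'cV[R]_k) :
  dotv a (\sum_(j < K) v j) = \sum_(j < K) dotv a (v j).
Proof.
rewrite /dotv exchange_big /=; apply: eq_bigr => i _.
by rewrite summxE big_distrr.
Qed.

Lemma dotv_delta k (a : 'cV[R]_k) i : dotv a (delta_mx i 0) = a i 0.
Proof.
rewrite /dotv (bigD1 i) //= big1 ?addr0; first by rewrite mxE !eqxx mulr1.
by move=> j /negbTE ji; rewrite mxE ji mulr0.
Qed.

Lemma dotv_mulmxl p k (A : 'M[R]_(p, k)) (x : 'cV[R]_k) (w : 'cV[R]_p) :
  dotv (A *m x) w = dotv x (A^T *m w).
Proof.
rewrite /dotv; under eq_bigr do rewrite mxE big_distrl /=.
rewrite exchange_big /=; apply: eq_bigr => j _.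
by rewrite mxE big_distrr /=; apply: eq_bigr => i _; rewrite mxE; ring.
Qed.

Lemma sqnormD k (a b : 'cV[R]_k) : sqnorm (a + b) = sqnorm a + 2 * dotv a b + sqnorm b.
Proof. by rewrite /sqnorm dotvDl !dotvDr (dotvC b a); ring. Qed.

Lemma sqnormB k (a b : 'cV[R]_k) : sqnorm (a - b) = sqnorm a - 2 * dotv a b + sqnorm b.
Proof. by rewrite sqnormD dotvNr /sqnorm dotvNl dotvNr opprK; ring. Qed.

Lemma sqnormZ k (t : R) (a : 'cV[R]_k) : sqnorm (t *: a) = t ^+ 2 * sqnorm a.
Proof. by rewrite /sqnorm dotvZl dotvZr; ring. Qed.

Lemma sqnorm_continuous k (z : 'cV[R]_k) : continuous (fun q : 'cV[R]_k => sqnorm (z - q)).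
Proof.
have -> : (fun q : 'cV[R]_k => sqnorm (z - q)) =
          (fun q => \sum_(i < k) (z i 0 - q i 0) * (z i 0 - q i 0)).
  by apply/funext => q; apply: eq_bigr => i _; rewrite !mxE.
apply: continuous_big; first exact: add_continuous.
move=> i _ q.
have zi : continuous (fun x : 'cV[R]_k => z i 0 - x i 0).
  by move=> x; exact: (cvgB (cvg_cst (z i 0)) (@coord_continuous R k 1 i 0 x)).
exact: continuousM (zi q) (zi q).
Qed.

End InnerProduct.

Lemma derive_quadratic (R : realType) m (f : 'cV[R]_m -> R) (a v : 'cV[R]_m) (c d : R) :
  (forall h, f (h *: v + a) = f a + h * c + h ^+ 2 * d) -> 'D_v f a = c.
Proof.
move=> hf; apply: cvg_lim => //.
have E : {near (0 : R)^', (fun h : R => c + h * d) =1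
    (fun h => h^-1 *: ((f \o shift a) (h *: v) - f a))}.
  near=> h => /=.
  have h0 : h != 0 by near: h; exact: nbhs_dnbhs_neq.
  by rewrite /shift hf /= [in RHS]/GRing.scale /=; field.
apply: cvg_trans; first exact: near_eq_cvg E.
suff H : (fun h : R => c + h * d) @ 0^' --> c + 0 * d by rewrite mul0r addr0 in H.
apply: (@cvg_within_filter _ _ _ (nbhs (0 : R))).
by apply: cvgD; [exact: cvg_cst | apply: cvgMl; exact: cvg_id].
Unshelve. all: by end_near.
Qed.

(** * Convex sets and projection *)

Section ConvexSet.
Variables (R : realType) (m : nat) (X : set 'cV[R]_m).
Hypothesis cvX : convex_set X.

Lemma convex_set_comb (p q : 'cV[R]_m) (t : R) : 0 <= t -> t <= 1 ->
  X p -> X q -> X (t *: p + (1 - t) *: q).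
Proof.
move=> t0 t1 Xp Xq.
by have := cvX (Itv01 t0 t1) (mem_set Xp) (mem_set Xq); rewrite inE.
Qed.

Lemma convex_set_avg K (p : 'I_K -> 'cV[R]_m) : (0 < K)%N ->
  (forall k, X (p k)) -> X (K%:R^-1 *: \sum_(k < K) p k).
Proof.
case: K p => // N p _; elim: N p => [|N IH] p Xp.
  by rewrite big_ord1 invr1 scale1r.
set S := \sum_(k < N.+1) p (widen_ord (leqnSn _) k).
have XS : X ((N.+1)%:R^-1 *: S) by exact: IH.
have N1 : (N.+1)%:R != 0 :> R by rewrite pnatr_eq0.
have N2 : (N.+1)%:R + 1 != 0 :> R by rewrite natr1 pnatr_eq0.
have t0 : 0 <= (N.+1)%:R / (N.+2)%:R :> R by rewrite divr_ge0.
have t1 : (N.+1)%:R / (N.+2)%:R <= 1 :> R.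
  by rewrite ler_pdivrMr ?ltr0n // mul1r ler_nat.
have := convex_set_comb t0 t1 XS (Xp ord_max).
congr X; rewrite big_ord_recr /=; apply/matrixP => i j; rewrite !mxE -/S.
have -> : (N.+2)%:R = (N.+1)%:R + 1 :> R by rewrite natr1.
move: (S i j) (p ord_max i j) ((N.+1)%:R : R) N1 N2 => s pk k k0 k1.
by field; rewrite ?k0 ?k1.
Qed.

Hypotheses (X0 : X !=set0) (cX : compact X).

Lemma proj_spec (z : 'cV[R]_m) : X (Defs.proj X z) /\
  forall q, X q -> enorm (z - Defs.proj X z) <= enorm (z - q).
Proof.
apply: (@xgetPex _ 0 [set p | X p /\ forall q, X q -> enorm (z - p) <= enorm (z - q)]).
have [c Xc hc] := compact_EVT_min X0 cX (continuous_subspaceT (@sqnorm_continuous R m z)).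
exists c; split; first by rewrite inE in Xc.
by move=> q Xq; rewrite ler_enorm; apply: hc; rewrite inE.
Qed.

Lemma proj_in (z : 'cV[R]_m) : X (Defs.proj X z).
Proof. by case: (proj_spec z). Qed.

Lemma proj_variational (z q : 'cV[R]_m) : X q ->
  dotv (z - Defs.proj X z) (q - Defs.proj X z) <= 0.
Proof.
move=> Xq; have [Xp hp] := proj_spec z; set p := Defs.proj X z in Xp hp *.
set d := dotv (z - p) (q - p); set S := sqnorm (q - p).
have S0 : 0 <= S by exact: sqnorm_ge0.
(* p is no farther from z than the points p + t (q - p) of X, which for a small
   t > 0 contradicts d > 0 *)
have key t : 0 <= t -> t <= 1 -> 2 * t * d <= t ^+ 2 * S.
  move=> t0 t1; have := hp _ (convex_set_comb t0 t1 Xq Xp); rewrite ler_enorm.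
  have -> : z - (t *: q + (1 - t) *: p) = (z - p) - t *: (q - p).
    by apply/matrixP => i j; rewrite !mxE; ring.
  by rewrite (sqnormB (z - p)) dotvZr sqnormZ -/d -/S; nra.
rewrite leNgt; apply/negP => d0.
have den0 : 0 < S + d + 1 by lra.
pose t := d / (S + d + 1).
have tp : 0 < t by rewrite divr_gt0.
have t1 : t <= 1 by rewrite ler_pdivrMr // mul1r; lra.
have tS : t * S < d by rewrite /t mulrAC ltr_pdivrMr // mulrDr; nra.
have := key t (ltW tp) t1; nra.
Qed.

Lemma proj_dist_le (z x : 'cV[R]_m) : X x ->
  sqnorm (Defs.proj X z - x) <= sqnorm (z - x).
Proof.
move=> Xx; have v := proj_variational z Xx; set p := Defs.proj X z in v *.
have -> : z - x = (z - p) + (p - x) by rewrite addrA subrK.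
rewrite (sqnormD (z - p)) -[X in dotv _ X](opprB x p) dotvNr.
by have := sqnorm_ge0 (z - p); nra.
Qed.

End ConvexSet.

Section SupInf.
Variable R : realType.

Lemma maxY_ub m n (Th : 'cV[R]_m -> bvec n -> R) x y : Th x y <= maxY Th x.
Proof.
apply: ub_le_sup; last by exists y.
exists (\sum_(y' : bvec n) `|Th x y'|) => z [y' _ <-].
rewrite (bigD1 y') //= (le_trans (ler_norm _)) // lerDl.
by apply: sumr_ge0 => i _.
Qed.

Lemma maxY_le m n (Th : 'cV[R]_m -> bvec n -> R) x c :
  (forall y, Th x y <= c) -> maxY Th x <= c.
Proof.
move=> h; apply: ge_sup; first by exists (Th x [ffun=> false]), [ffun=> false].
by move=> z [y _ <-].
Qed.

Lemma minmax_ge m n (X : set 'cV[R]_m) (Th : 'cV[R]_m -> bvec n -> R) c :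
  X !=set0 -> (forall x, X x -> c <= maxY Th x) -> c <= minmax X Th.
Proof.
move=> [x0 Xx0] h; apply: lb_le_inf; first by exists (maxY Th x0), x0.
by move=> z [x Xx <-]; exact: h.
Qed.

(* diam is a [sup] and hence 0 when the distances are unbounded; [0 < diam X] excludes this *)
Lemma enorm_le_diam m (X : set 'cV[R]_m) x y : 0 < diam X -> X x -> X y ->
  enorm (x - y) <= diam X.
Proof.
move=> D0 Xx Xy.
set E := [set d | exists x y, X x /\ X y /\ d = enorm (x - y)].
have hs : has_sup E.
  by apply: contrapT => hs; move: D0; rewrite /diam -/E sup_out // ltxx.
by apply: sup_upper_bound => //; exists x, y.
Qed.

Lemma nb_iter_ge (D L eps : R) : 0 < eps ->
  9 * ((D ^+ 2 + L ^+ 2) / (2 * eps)) ^+ 2 <= (nb_iter D L eps)%:R.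
Proof.
move=> e0; rewrite /nb_iter natr_absz ger0_norm; first exact: Num.Theory.ceil_ge.
rewrite Num.Theory.ceil_ge0 (lt_le_trans (_ : -1 < 0)) ?ltrN10 //.
by rewrite mulr_ge0 // sqr_ge0.
Qed.

End SupInf.

(** * Double greedy *)

Section DoubleGreedy.
Variables (R : realType) (n : nat).
Implicit Types (g : bvec n -> R) (O S T lo hi : bvec n) (k : 'I_n).

Definition bsub S T := forall j, S j -> T j.

Definition submodular g := forall S T k, bsub S T -> T k = false ->
  g (setb T k true) - g T <= g (setb S k true) - g S.

(* (O \/ lo) /\ hi, the optimum O forced to agree with the decisions taken so far
   (OPT_k in the analysis of Buchbinder et al.) *)
Definition clamp O lo hi : bvec n := [ffun j => (O j || lo j) && hi j].

Lemma setbE S k b j : setb S k b j = if j == k then b else S j.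
Proof. by rewrite ffunE. Qed.

Lemma setb_id S k b : S k = b -> setb S k b = S.
Proof. by move=> Sk; apply/ffunP => j; rewrite setbE; case: eqP => // ->. Qed.

Lemma setbK S k b b' : S k = b' -> setb (setb S k b) k b' = S.
Proof. by move=> Sk; apply/ffunP => j; rewrite !setbE; case: eqP => // ->. Qed.

Lemma clampE O lo hi j : clamp O lo hi j = (O j || lo j) && hi j.
Proof. by rewrite ffunE. Qed.

Lemma clamp_setb_lo O lo hi k : hi k ->
  clamp O (setb lo k true) hi = setb (clamp O lo hi) k true.
Proof.
by move=> hk; apply/ffunP => j; rewrite !(clampE, setbE); case: eqP => [->|]; rewrite ?hk ?orbT.
Qed.

Lemma clamp_setb_hi O lo hi k :
  clamp O lo (setb hi k false) = setb (clamp O lo hi) k false.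
Proof. by apply/ffunP => j; rewrite !(clampE, setbE); case: eqP; rewrite ?andbF. Qed.

Lemma clamp_id O S : clamp O S S = S.
Proof. by apply/ffunP => j; rewrite clampE; case: (S j); rewrite ?orbT ?andbF. Qed.

Lemma clamp_init O : clamp O [ffun=> false] [ffun=> true] = O.
Proof. by apply/ffunP => j; rewrite clampE !ffunE orbF andbT. Qed.

Lemma submodular_setb g S T k : submodular g -> bsub S (setb T k false) -> T k ->
  g T - g (setb T k false) <= g (setb S k true) - g S.
Proof.
by move=> sg ST Tk; have := sg _ _ k ST; rewrite setbE eqxx setbK // => /(_ erefl).
Qed.

(* the potential argument: at each step the value lost by the clamped optimum is
   at most c times the value gained by lo and hi, and both telescope along the run *)
Definition dg_loss g O (p q : bvec n * bvec n) := g (clamp O p.1 p.2) - g (clamp O q.1 q.2).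
Definition dg_gain g (p q : bvec n * bvec n) := (g q.1 - g p.1) + (g q.2 - g p.2).

Section Step.
Variables (g : bvec n -> R) (O lo hi : bvec n) (k : 'I_n).
Hypotheses (lohi : bsub lo hi) (lok : lo k = false) (hik : hi k = true).
Let a := g (setb lo k true) - g lo.
Let b := g (setb hi k false) - g hi.
Let O' := clamp O lo hi.
Let q := dg_step g (lo, hi) k.

Lemma bsub_lo_setb_hi : bsub lo (setb hi k false).
Proof. by move=> j lj; rewrite setbE; case: eqP => [ej|_]; [rewrite ej lok in lj|exact: lohi]. Qed.

Lemma bsub_lo_clamp : bsub lo O'.
Proof. by move=> j lj; rewrite clampE lj orbT lohi. Qed.

Lemma bsub_lo_setb_clamp : bsub lo (setb O' k false).
Proof.
move=> j lj; rewrite setbE; case: eqP => [ej|_]; first by rewrite ej lok in lj.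
exact: bsub_lo_clamp.
Qed.

Lemma bsub_clamp_setb_hi : O' k = false -> bsub O' (setb hi k false).
Proof.
move=> Ok j; rewrite setbE; case: eqP => [->|_]; first by rewrite Ok.
by rewrite clampE => /andP[].
Qed.

Lemma dg_step_gain_ge0 : submodular g -> 0 <= a + b.
Proof. by move=> sg; have := submodular_setb sg bsub_lo_setb_hi hik; rewrite /a /b; lra. Qed.

Lemma dg_step_loss_le_gain : submodular g -> dg_loss g O (lo, hi) q <= dg_gain g (lo, hi) q.
Proof.
move=> sg; have ab := dg_step_gain_ge0 sg; rewrite /q /dg_loss /dg_gain /dg_step /=.
case: ifP => ba /=; move: ba; rewrite -/a -/b => ba.
- rewrite clamp_setb_lo // -/O' subrr addr0 -/a.
  case Ok: (O' k); first by rewrite (setb_id Ok); lra.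
  have := submodular_setb sg (bsub_clamp_setb_hi Ok) hik.
  by move: ab ba; rewrite /a /b; lra.
- rewrite clamp_setb_hi -/O' subrr add0r -/b.
  case Ok: (O' k); last by rewrite (setb_id Ok); lra.
  have := submodular_setb sg bsub_lo_setb_clamp Ok.
  by move/negbT: ba; rewrite -ltNge; move: ab; rewrite /a /b; lra.
Qed.

Lemma dg_step_loss_le0 : submodular g -> submodular (fun y => - g y) ->
  dg_loss g O (lo, hi) q <= 0.
Proof.
move=> sg sg'; have ab := dg_step_gain_ge0 sg.
have ab' := submodular_setb sg' bsub_lo_setb_hi hik.
rewrite /q /dg_loss /dg_step /=.
case: ifP => ba /=; move: ba; rewrite -/a -/b => ba.
- rewrite clamp_setb_lo // -/O'.
  case Ok: (O' k); first by rewrite (setb_id Ok) subrr.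
  by have := sg' _ _ k bsub_lo_clamp Ok; move: ab ab' ba; rewrite /a /b /=; lra.
- rewrite clamp_setb_hi -/O'.
  case Ok: (O' k); last by rewrite (setb_id Ok) subrr.
  have := submodular_setb sg bsub_lo_setb_clamp Ok.
  by move/negbT: ba; rewrite -ltNge; move: ab ab'; rewrite /a /b; lra.
Qed.

Lemma dg_step_spec : [/\ bsub q.1 q.2, q.1 k = q.2 k &
  forall j, j != k -> q.1 j = lo j /\ q.2 j = hi j].
Proof.
rewrite /q /dg_step; case: ifP => _ /=; split; rewrite ?setbE ?eqxx //.
- by move=> j; rewrite setbE; case: eqP => [->|_] //; exact: lohi.
- by move=> j /negbTE jk; rewrite setbE jk.
- exact: bsub_lo_setb_hi.
- by move=> j /negbTE jk; rewrite setbE jk.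
Qed.

End Step.

Lemma dg_fold_spec g O c :
  (forall lo hi k, bsub lo hi -> lo k = false -> hi k = true ->
     dg_loss g O (lo, hi) (dg_step g (lo, hi) k)
       <= c * dg_gain g (lo, hi) (dg_step g (lo, hi) k)) ->
  forall s lo hi, uniq s -> bsub lo hi -> (forall j, j \in s -> lo j = false /\ hi j) ->
  let q := foldl (dg_step g) (lo, hi) s in
  [/\ forall j, j \in s -> q.1 j = q.2 j,
      forall j, j \notin s -> q.1 j = lo j /\ q.2 j = hi j &
      dg_loss g O (lo, hi) q <= c * dg_gain g (lo, hi) q].
Proof.
move=> hstep; elim=> [|k s IH] lo hi /= us lohi hs.
  by split => //; rewrite /dg_loss /dg_gain !subrr addr0 mulr0.
move/andP: us => [ks us]; have [lk hk] := hs k (mem_head _ _).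
have [s1 s2 s3] := dg_step_spec g lohi lk hk.
set p := dg_step g (lo, hi) k in s1 s2 s3 *.
have hs' j : j \in s -> p.1 j = false /\ p.2 j.
  move=> js; have jk : j != k by apply: contraNneq ks => <-.
  by have [-> ->] := s3 j jk; apply: hs; rewrite in_cons js orbT.
have := IH p.1 p.2 us s1 hs'; rewrite -surjective_pairing.
set q := foldl _ _ _; case=> t1 t2 t3; split.
- move=> j; rewrite in_cons => /orP [/eqP -> | js]; last exact: t1.
  by have [-> ->] := t2 k ks.
- move=> j; rewrite in_cons negb_or => /andP [jk js].
  by have [-> ->] := t2 j js; exact: s3.
- have := hstep lo hi k lohi lk hk; rewrite -/p => h.
  move: t3 h; rewrite /dg_loss /dg_gain; nra.
Qed.

Lemma DG_loss_le g O c :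
  (forall lo hi k, bsub lo hi -> lo k = false -> hi k = true ->
     dg_loss g O (lo, hi) (dg_step g (lo, hi) k)
       <= c * dg_gain g (lo, hi) (dg_step g (lo, hi) k)) ->
  g O - g (DG g) <= c * ((g (DG g) - g [ffun=> false]) + (g (DG g) - g [ffun=> true])).
Proof.
move=> hstep.
have [] := dg_fold_spec hstep (enum_uniq 'I_n) (lo := [ffun=> false]) (hi := [ffun=> true]).
- by move=> j; rewrite ffunE.
- by move=> j _; rewrite !ffunE.
rewrite /DG; set q := foldl _ _ _ => q12 _ .
have q21 : q.2 = q.1 by apply/ffunP => j; rewrite q12 // mem_enum.
by rewrite /dg_loss /dg_gain /= q21 clamp_id clamp_init.
Qed.

Lemma DG_third g : (forall y, 0 <= g y) -> submodular g -> forall O, g O <= 3 * g (DG g).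
Proof.
move=> g0 sg O.
have := @DG_loss_le g O 1 (fun lo hi k h1 h2 h3 =>
  ltac:(rewrite mul1r; exact: dg_step_loss_le_gain)).
by have := g0 [ffun=> false]; have := g0 [ffun=> true]; lra.
Qed.

Lemma DG_max g : submodular g -> submodular (fun y => - g y) ->
  forall O, g O <= g (DG g).
Proof.
move=> sg sg' O.
have := @DG_loss_le g O 0 (fun lo hi k h1 h2 h3 =>
  ltac:(rewrite mul0r; exact: dg_step_loss_le0)).
lra.
Qed.

End DoubleGreedy.

(** * Projected subgradient descent against double-greedy responses *)

Section Descent.
Variables (R : realType) (m n : nat) (X : set 'cV[R]_m) (Th : 'cV[R]_m -> bvec n -> R).
Variables (L eta : R) (x0 : 'cV[R]_m).
Hypotheses (X0 : X !=set0) (cX : compact X) (cvX : convex_set X) (Xx0 : X x0).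
Hypothesis Th_subgrad : forall y x x', Th x y + dotv (grad (Th^~ y) x) (x' - x) <= Th x' y.
Hypothesis grad_le : forall y x, X x -> enorm (grad (Th^~ y) x) <= L.
Hypothesis eta_gt0 : 0 < eta.

Let xs k := iterate X Th eta x0 k.
Let ys k := DG (Th (xs k)).

Lemma iterate_in k : X (xs k).
Proof. by case: k => //= k; exact: proj_in. Qed.

Lemma iterate_step k x : X x ->
  sqnorm (xs k.+1 - x) <= sqnorm (xs k - x)
    - 2 * eta * (Th (xs k) (ys k) - Th x (ys k)) + eta ^+ 2 * L ^+ 2.
Proof.
move=> Xx; set g := grad (Th^~ (ys k)) (xs k).
have h1 : sqnorm (xs k.+1 - x) <= sqnorm ((xs k - x) - eta *: g).
  have -> : (xs k - x) - eta *: g = (xs k - eta *: g) - x.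
    by apply/matrixP => i j; rewrite !mxE; ring.
  exact: proj_dist_le.
have hg : sqnorm g <= L ^+ 2.
  have gL := grad_le (ys k) (iterate_in k); rewrite -enorm_sqr.
  by have := enorm_ge0 g; rewrite -/g in gL *; nra.
have sub := Th_subgrad (ys k) (xs k) x; rewrite -/g -(opprB (xs k)) dotvNr in sub.
move: h1; rewrite (sqnormB (xs k - x)) dotvZr sqnormZ dotvC.
have p1 : 0 <= eta * (Th x (ys k) - Th (xs k) (ys k) + dotv g (xs k - x)).
  by apply: mulr_ge0; [exact: ltW | lra].
have p2 : 0 <= eta ^+ 2 * (L ^+ 2 - sqnorm g) by rewrite mulr_ge0 ?sqr_ge0 ?subr_ge0.
by nra.
Qed.

Lemma iterate_regret K x : X x ->
  2 * eta * \sum_(k < K) (Th (xs k) (ys k) - Th x (ys k))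
  <= sqnorm (x0 - x) + K%:R * (eta ^+ 2 * L ^+ 2).
Proof.
move=> Xx.
suff : 2 * eta * \sum_(k < K) (Th (xs k) (ys k) - Th x (ys k)) + sqnorm (xs K - x)
       <= sqnorm (x0 - x) + K%:R * (eta ^+ 2 * L ^+ 2).
  by have := sqnorm_ge0 (xs K - x); lra.
elim: K => [|K IH]; first by rewrite big_ord0 mulr0 add0r mul0r addr0.
have := iterate_step K Xx; rewrite big_ord_recr -natr1 /=; lra.
Qed.

End Descent.

Lemma subgrad_jensen (R : realType) m (f : 'cV[R]_m -> R) (g : 'cV[R]_m -> 'cV[R]_m)
  K (p : 'I_K -> 'cV[R]_m) : (0 < K)%N ->
  (forall x x', f x + dotv (g x) (x' - x) <= f x') ->
  f (K%:R^-1 *: \sum_k p k) <= K%:R^-1 * \sum_k f (p k).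
Proof.
move=> K0 hf; set c := K%:R^-1 *: _.
have K0' : 0 < K%:R :> R by rewrite ltr0n.
have hs : \sum_(k < K) (f c + dotv (g c) (p k - c)) <= \sum_(k < K) f (p k).
  by apply: ler_sum => k _; exact: hf.
rewrite big_split /= -dotv_sumr sumrB !sumr_const card_ord in hs.
have c_bary : \sum_k p k - c *+ K = 0.
  by rewrite /c -scaler_nat scalerA mulfV ?gt_eqF // scale1r subrr.
rewrite c_bary dotv0r addr0 -mulr_natl in hs.
by rewrite ler_pdivlMl // (le_trans _ hs).
Qed.

(** * Minimax guarantee of the algorithm *)

Lemma regret_arith (R : realType) (D L eps S kk : R) : 0 < eps -> 0 < kk ->
  9 * ((D ^+ 2 + L ^+ 2) / (2 * eps)) ^+ 2 <= kk ->
  2 * (Num.sqrt kk)^-1 * S <= D ^+ 2 + L ^+ 2 -> S <= kk * eps / 3.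
Proof.
move=> e0 k0 hK hS; set Q := (D ^+ 2 + L ^+ 2) / (2 * eps) in hK.
have Q0 : 0 <= Q by rewrite divr_ge0 ?addr_ge0 ?sqr_ge0 // mulr_ge0 // ltW.
have DL : D ^+ 2 + L ^+ 2 = 2 * eps * Q by rewrite /Q mulrC divfK // mulf_neq0 // gt_eqF.
set s := Num.sqrt kk in hS; have s0 : 0 < s by rewrite sqrtr_gt0.
have s2 : s ^+ 2 = kk by rewrite sqr_sqrtr // ltW.
have sQ : 3 * Q <= s by rewrite -s2 in hK; nra.
have {}hS : S <= s * eps * Q.
  have -> : S = s * (s^-1 * S) by rewrite mulrA mulfV ?gt_eqF // mul1r.
  by move: hS; rewrite DL -mulrA; nra.
have := mulr_ge0 (mulr_ge0 (ltW s0) (ltW e0)) (_ : 0 <= s - 3 * Q).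
by rewrite subr_ge0 -s2 => /(_ sQ); nra.
Qed.

Section Guarantee.
Variables (R : realType) (m n : nat) (X : set 'cV[R]_m) (Th : 'cV[R]_m -> bvec n -> R).
Variables (L eps c : R) (x0 : 'cV[R]_m).
Hypotheses (X0 : X !=set0) (cX : compact X) (cvX : convex_set X) (Xx0 : X x0).
Hypothesis D_gt0 : 0 < diam X.
Hypothesis Th_subgrad : forall y x x', Th x y + dotv (grad (Th^~ y) x) (x' - x) <= Th x' y.
Hypothesis grad_le : forall y x, X x -> enorm (grad (Th^~ y) x) <= L.
Hypothesis eps_gt0 : 0 < eps.
Hypotheses (c_gt0 : 0 < c) (c_le3 : c <= 3).
Hypothesis DG_approx : forall x, maxY Th x <= c * Th x (DG (Th x)).

Let K := nb_iter (diam X) L eps.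
Let xh := xhat X Th K x0.
Let xs k := iterate X Th (Num.sqrt K%:R)^-1 x0 k.
Let ys k := DG (Th (xs k)).

Lemma nb_iter_gt0 : (0 < K)%N.
Proof.
rewrite -(ltr0n R); apply: lt_le_trans (nb_iter_ge _ _ eps_gt0).
rewrite mulr_gt0 // exprn_gt0 // divr_gt0 ?mulr_gt0 //.
by rewrite ltr_wpDr ?sqr_ge0 // exprn_gt0.
Qed.

Lemma regret_le x : X x ->
  \sum_(k < K) (Th (xs k) (ys k) - Th x (ys k)) <= K%:R * eps / 3.
Proof.
move=> Xx; have K0 : 0 < K%:R :> R by rewrite ltr0n; exact: nb_iter_gt0.
have eta0 : 0 < (Num.sqrt K%:R)^-1 :> R by rewrite invr_gt0 sqrtr_gt0.
refine (regret_arith eps_gt0 K0 (nb_iter_ge _ _ eps_gt0) _).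
apply: le_trans (iterate_regret X0 cX cvX Xx0 Th_subgrad grad_le eta0 K Xx) _.
have D2 : sqnorm (x0 - x) <= diam X ^+ 2.
  rewrite -enorm_sqr lerXn2r ?nnegrE ?enorm_ge0 ?(ltW D_gt0) //.
  exact: enorm_le_diam.
have KK : K%:R / K%:R = 1 :> R by rewrite divff // gt_eqF.
by rewrite exprVn sqr_sqrtr ?ler0n // mulrA KK mul1r lerD2r.
Qed.

Lemma maxY_xhat_le x : X x -> maxY Th xh <= c * maxY Th x + eps.
Proof.
move=> Xx; apply: maxY_le => y; set M := maxY Th x.
have K0 : 0 < K%:R :> R by rewrite ltr0n; exact: nb_iter_gt0.
have J : Th xh y <= K%:R^-1 * \sum_(k < K) Th (xs k) y.
  exact: subgrad_jensen nb_iter_gt0 (Th_subgrad y).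
have s1 : \sum_(k < K) Th (xs k) y <= c * \sum_(k < K) Th (xs k) (ys k).
  rewrite mulr_sumr; apply: ler_sum => k _.
  exact: le_trans (maxY_ub _ _ _) (DG_approx _).
have s2 : \sum_(k < K) Th x (ys k) <= K%:R * M.
  have -> : K%:R * M = \sum_(k < K) M by rewrite sumr_const card_ord mulr_natl.
  by apply: ler_sum => k _; exact: maxY_ub.
have s3 := regret_le Xx; rewrite sumrB in s3.
have s4 : c * \sum_(k < K) Th (xs k) (ys k) <= c * (K%:R * M + K%:R * eps / 3).
  by rewrite ler_wpM2l ?(ltW c_gt0) //; lra.
have s5 : c * (K%:R * eps / 3) <= K%:R * eps.
  have Ke : 0 < K%:R * eps by rewrite mulr_gt0.
  have : 0 <= (3 - c) * (K%:R * eps) by apply: mulr_ge0; [rewrite subr_ge0 | exact: ltW].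
  nra.
have : \sum_(k < K) Th (xs k) y <= K%:R * (c * M + eps) by lra.
by rewrite -ler_pdivrMl // => /(le_trans J).
Qed.

Theorem DG_oracle_approx_minimax : approx_minimax X Th c^-1 eps xh (yhat X Th K x0).
Proof.
have Xxh : X xh by apply: (convex_set_avg cvX nb_iter_gt0) => k; exact: iterate_in.
have M1 := maxY_ub Th xh (DG (Th xh)); have M2 := DG_approx xh.
have mm : (maxY Th xh - eps) / c <= minmax X Th.
  apply: minmax_ge => // x Xx; rewrite ler_pdivrMr // mulrC.
  by have := maxY_xhat_le Xx; lra.
split => //; split; first by rewrite ler_pdivrMl // mulrC.
by rewrite invrK /yhat -/xh; move: mm; rewrite ler_pdivrMr // mulrC; lra.
Qed.

End Guarantee.

(** * The objective Theta *)

Section Theta.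
Variables (R : realType) (m r n : nat) (F : 'cV[R]_m -> 'cV[R]_r) (C : 'M[R]_(r, n)).

Lemma ThetaE x y : Theta F C x y = 2^-1 * sqnorm (F x - C *m @rvec R n y).
Proof. by rewrite /Theta enorm_sqr. Qed.

Lemma Theta_ge0 x y : 0 <= Theta F C x y.
Proof. by rewrite ThetaE mulr_ge0 ?sqnorm_ge0 // invr_ge0. Qed.

Section Affine.
Variables (A : 'M[R]_(r, m)) (b : 'cV[R]_r).
Hypothesis hF : forall x, F x = A *m x + b.

Lemma Theta_expand x x' y : Theta F C x' y = Theta F C x y
  + dotv (A^T *m (F x - C *m rvec R y)) (x' - x) + 2^-1 * sqnorm (A *m (x' - x)).
Proof.
rewrite !ThetaE.
have -> : F x' - C *m rvec R y = (F x - C *m rvec R y) + A *m (x' - x).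
  by rewrite !hF mulmxBr [RHS]addrC !addrA subrK.
rewrite sqnormD dotvC dotv_mulmxl dotvC.
by rewrite !mulrDr mulrA mulVf ?pnatr_eq0 // mul1r.
Qed.

Lemma grad_Theta x y :
  grad (fun z => Theta F C z y) x = A^T *m (F x - C *m rvec R y).
Proof.
apply/matrixP => i j; rewrite ord1 mxE; apply: derive_quadratic => h.
rewrite (Theta_expand x (h *: delta_mx i 0 + x)) addrK dotvZr dotv_delta.
by rewrite -scalemxAr sqnormZ [2^-1 * _]mulrCA.
Qed.

Lemma Theta_subgrad y x x' :
  Theta F C x y + dotv (grad (fun z => Theta F C z y) x) (x' - x) <= Theta F C x' y.
Proof.
by rewrite grad_Theta (Theta_expand x x') lerDl mulr_ge0 ?sqnorm_ge0 // invr_ge0.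
Qed.

End Affine.

Lemma rvec_setb (S : bvec n) k : S k = false ->
  rvec R (setb S k true) = rvec R S + delta_mx k 0.
Proof.
move=> Sk; apply/matrixP => i j; rewrite !mxE setbE ord1 eqxx andbT.
by case: eqP => [->|_]; rewrite ?Sk ?addr0 ?add0r.
Qed.

Lemma Theta_marginal x (S : bvec n) k : S k = false ->
  Theta F C x (setb S k true) - Theta F C x S =
  - dotv (F x) (C *m delta_mx k 0) + 2^-1 * sqnorm (C *m delta_mx k 0)
  + \sum_j (S j)%:R * coldot C j k.
Proof.
move=> Sk; rewrite !ThetaE rvec_setb // mulmxDr opprD addrA sqnormB dotvBl.
have -> : dotv (C *m rvec R S) (C *m delta_mx k 0) = \sum_j (S j)%:R * coldot C j k.
  rewrite dotv_mulmxl; apply: eq_bigr => j _; rewrite mxE; congr (_ * _).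
  by rewrite -(colE k C) mxE; apply: eq_bigr => i _; rewrite !mxE.
by field.
Qed.

Lemma Theta_submodular x : obtuse C -> submodular (Theta F C x).
Proof.
move=> ob S T k ST Tk.
have Sk : S k = false by apply/negbTE/negP => /ST; rewrite Tk.
rewrite (Theta_marginal x Tk) (Theta_marginal x Sk) lerD2l; apply: ler_sum => j _.
have [->|jk] := eqVneq j k; first by rewrite Sk Tk !mul0r.
have cjk := ob j k jk.
case Sj: (S j); first by rewrite (ST j Sj).
by case: (T j); rewrite ?mulr1n mulr0n mul0r ?mul1r.
Qed.

Lemma Theta_supermodular x : orthogonal_cols C ->
  submodular (fun y => - Theta F C x y).
Proof.
move=> oc S T k ST Tk.
have Sk : S k = false by apply/negbTE/negP => /ST; rewrite Tk.
have Z (V : bvec n) : V k = false -> \sum_j (V j)%:R * coldot C j k = 0.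
  move=> Vk; apply: big1 => j _; have [->|jk] := eqVneq j k.
    by rewrite Vk mulr0n mul0r.
  by rewrite oc // mulr0.
have := Theta_marginal x Tk; have := Theta_marginal x Sk.
by rewrite (Z T Tk) (Z S Sk); lra.
Qed.

End Theta.

Unset Implicit Arguments. Set Strict Implicit. Set Printing Implicit Defensive.

Theorem mainTheorem10 (R : realType) (m r n : nat)
  (X : set 'cV[R]_m) (F : 'cV[R]_m -> 'cV[R]_r) (C : 'M[R]_(r, n)) (L eps : R)
  (x0 : 'cV[R]_m) :
  X !=set0 -> convex_set X -> compact X -> 0 < diam X ->
  affine F -> nonzero_cols C -> 0 < L ->
  (forall y : bvec n, forall x1 x2, X x1 -> X x2 ->
     `|Theta F C x1 y - Theta F C x2 y| <= L * enorm (x1 - x2)) ->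
  (forall (y : bvec n) x, X x -> enorm (grad (fun z => Theta F C z y) x) <= L) ->
  0 < eps -> X x0 ->
  let K := nb_iter (diam X) L eps in
  let xh := xhat X (Theta F C) K x0 in
  let yh := yhat X (Theta F C) K x0 in
  (obtuse C -> approx_minimax X (Theta F C) (3^-1) eps xh yh) /\
  (orthogonal_cols C -> global_minimax X (Theta F C) eps xh yh).
Proof.
move=> X0 cvX cX D0 [A [b hF]] _ _ _ hgrad e0 Xx0 K xh yh.
have sub := Theta_subgrad C hF.
split => hC.
- apply: DG_oracle_approx_minimax => // x.
  apply: maxY_le; apply: DG_third; first exact: Theta_ge0.
  exact: Theta_submodular.
- have ob : obtuse C by move=> i j ij; rewrite hC.
  rewrite /global_minimax -invr1.
  apply: DG_oracle_approx_minimax => // [|x]; first by rewrite ler1n.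
  rewrite mul1r; apply: maxY_le; apply: DG_max.
    exact: Theta_submodular.
  exact: Theta_supermodular.
Qed.
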